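(* Let $\alpha\in(1,\infty)$, let $p_X$ be a distribution on a finite set $\mathcal X$ and $p_{Y\mid X}$ a channel to a finite set $\mathcal Y$. Let $\tilde q^{(0)}_{Y\mid X}$ be an initial channel and for $k\ge0$ define $$r^{(k)}_{X\mid Y}(x\mid y)=\frac{p_X(x)\tilde q^{(k)}_{Y\mid X}(y\mid x)}{\sum_{x'}p_X(x')\tilde q^{(k)}_{Y\mid X}(y\mid x')},\qquad \tilde q^{(k+1)}_{Y\mid X}(y\mid x)=\frac{p_{Y\mid X}(y\mid x)r^{(k)}_{X\mid Y}(x\mid y)^{1-1/\alpha}}{\sum_{y'}p_{Y\mid X}(y'\mid x)r^{(k)}_{X\mid Y}(x\mid y')^{1-1/\alpha}}.$$ Then $\lim_{k\to\infty}\tilde F_\alpha^{\mathrm C}(\tilde q^{(k+1)}_{Y\mid X},r^{(k)}_{X\mid Y})=I_\alpha^{\mathrm C}(X;Y)$.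
   Context: $\log$ is natural, $D$ is the Kullback–Leibler divergence, and $D_\alpha(p\|q):=\frac{1}{\alpha-1}\log\sum_zp(z)^\alpha q(z)^{1-\alpha}$. The Augustin–Csiszár mutual information is $I_\alpha^{\mathrm C}(X;Y):=\min_{q_Y}\sum_xp_X(x)D_\alpha(p_{Y\mid X}(\cdot\mid x)\|q_Y)$. For a channel $\tilde q_{Y\mid X}$ and a reverse channel $r_{X\mid Y}$, $\tilde F_\alpha^{\mathrm C}(\tilde q_{Y\mid X},r_{X\mid Y}):=\frac{\alpha}{1-\alpha}D(p_X\tilde q_{Y\mid X}\|p_Xp_{Y\mid X})+\mathbb E^{p_X\tilde q_{Y\mid X}}[\log\frac{r_{X\mid Y}(X\mid Y)}{p_X(X)}]$. *)

From HB Require Import structures.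
From mathcomp Require Import all_boot all_order all_algebra.
From mathcomp Require Import all_classical all_reals all_analysis.
Set Implicit Arguments. Unset Strict Implicit. Unset Printing Implicit Defensive.
Import Order.TTheory GRing.Theory Num.Theory.
Local Open Scope ring_scope.
Local Open Scope classical_set_scope.

Section AC.
Variables (R : realType) (X Y : finType).

Definition probvec (T : finType) (P : T -> R) : Prop :=
  (forall t, 0 <= P t) /\ \sum_(t : T) P t = 1.

(* A channel W : X -> Y -> R, W x y = W(y|x). *)
Definition channel (W : X -> Y -> R) : Prop := forall x, probvec (W x).

(* Renyi divergence of order a > 1, extended-real valued:
   D_a(P||Q) = 1/(a-1) log sum_z P(z)^a Q(z)^(1-a), with 0*(anything)=0
   conventions, and +oo when P is not absolutely continuous w.r.t. Q. *)
Definition renyi (a : R) (P Q : Y -> R) : \bar R :=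
  if [exists z, (0 < P z) && (Q z == 0)] then +oo%E
  else ((a - 1)^-1 * ln (\sum_(z : Y) P z `^ a * Q z `^ (1 - a)))%:E.

(* Augustin--Csiszar mutual information: min over output distributions q_Y
   of sum_x p_X(x) D_a(p_{Y|X}(.|x) || q_Y)  (taken as an infimum in \bar R). *)
Definition IC (a : R) (p : X -> R) (W : X -> Y -> R) : \bar R :=
  ereal_inf [set (\sum_(x : X) ((p x)%:E * renyi a (W x) q))%E | q in probvec (T:=Y)].

(* Reverse channel r(x|y) = p(x) q(y|x) / sum_x' p(x') q(y|x'); stored as r x y. *)
Definition revch (p : X -> R) (q : X -> Y -> R) : X -> Y -> R :=
  fun x y => p x * q x y / \sum_(x' : X) p x' * q x' y.

Definition updch (a : R) (W : X -> Y -> R) (r : X -> Y -> R) : X -> Y -> R :=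
  fun x y => W x y * r x y `^ (1 - a^-1) /
             \sum_(y' : Y) W x y' * r x y' `^ (1 - a^-1).

Fixpoint qiter (a : R) (p : X -> R) (W q0 : X -> Y -> R) (k : nat) : X -> Y -> R :=
  match k with
  | 0 => q0
  | k'.+1 => updch a W (revch p (qiter a p W q0 k'))
  end.

Definition riter (a : R) (p : X -> R) (W q0 : X -> Y -> R) (k : nat) : X -> Y -> R :=
  revch p (qiter a p W q0 k).

(* D(p_X q || p_X W) = sum_{x,y} p(x) q(y|x) log (q(y|x)/W(y|x)).
   (Real-valued; only evaluated where q << W, which holds for the iterates.) *)
Definition KLjoint (p : X -> R) (q W : X -> Y -> R) : R :=
  \sum_(x : X) \sum_(y : Y) p x * q x y * ln (q x y / W x y).

Definition FC (a : R) (p : X -> R) (W q r : X -> Y -> R) : R :=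
  a / (1 - a) * KLjoint p q W +
  \sum_(x : X) \sum_(y : Y) p x * q x y * ln (r x y / p x).

End AC.

From mathcomp Require Import all_boot all_order all_algebra.
From mathcomp Require Import all_classical all_reals all_analysis.
From mathcomp Require Import ring lra.
Import Order.TTheory GRing.Theory Num.Theory numFieldNormedType.Exports.
Set Implicit Arguments.
Unset Strict Implicit.
Unset Printing Implicit Defensive.

Local Open Scope ring_scope.
Local Open Scope classical_set_scope.

(* Let [objective k] be the value F(q^(k+1), r^(k)).  Substituting the update
   rule gives objective k = sum_x p(x) (a/(a-1) ln Z_k(x) - ln p(x)), Z_k being
   the normaliser of the update.  Gibbs' inequality bounds objective k by
   sum_x p(x) D_a(W_x || Q) for every output distribution Q, hence by I_a^C;
   taking for Q the output marginal of q^(k+1) yields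
   I_a^C <= objective (k+1) + eps_k, where eps_k is the p-average of
   D_a(q^(k+2)_x || q^(k+1)_x).  The increment objective (k+1) - objective k
   dominates the p-average of D(q^(k+1)_x || q^(k+2)_x), so the objective is
   nondecreasing; since all iterates stay above a fixed mu > 0 on the support,
   a Hellinger-type bound turns this into eps_k <= C sqrt(objective (k+1) -
   objective k).  A bounded nondecreasing sequence has vanishing increments, so
   the objective converges to I_a^C. *)

Section Preliminaries.
Variable R : realType.

Lemma ln_le_subr1 (u : R) : 0 < u -> ln u <= u - 1.
Proof.
move=> u_gt0; have := @le_ln1Dx R (u - 1).
by rewrite (_ : 1 + (u - 1) = u); [apply; lra | ring].
Qed.

Lemma sub_le_mul_ln_div (A B : R) : 0 <= A -> 0 <= B -> (0 < A -> 0 < B) ->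
  A - B <= A * ln (A / B).
Proof.
rewrite le_eqVlt => /predU1P[<- B_ge0 _|A_gt0 _ /(_ A_gt0) B_gt0].
  by rewrite mul0r sub0r oppr_le0.
have := ln_le_subr1 (divr_gt0 B_gt0 A_gt0).
rewrite -[A / B]invf_div lnV ?posrE ?divr_gt0 //.
have : A * (B / A) = B by rewrite mulrCA divff ?gt_eqF ?mulr1.
by move: (B / A) (ln (B / A)) => t l; nra.
Qed.

Lemma sqr_sub_sqrt_addE (u v : R) : 0 <= u -> 0 <= v ->
  (Num.sqrt u - Num.sqrt v) ^+ 2 + (u - v) = 2 * (u - Num.sqrt (u * v)).
Proof.
move=> u_ge0 v_ge0; rewrite sqrtrM //.
move: (sqr_sqrtr u_ge0) (sqr_sqrtr v_ge0).
by move: (Num.sqrt u) (Num.sqrt v) => s t <- <-; ring.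
Qed.

Lemma sub_sqrt_le_mul_ln_div (A B : R) : 0 <= A -> 0 <= B -> (0 < A -> 0 < B) ->
  2 * (A - Num.sqrt (A * B)) <= A * ln (A / B).
Proof.
rewrite le_eqVlt => /predU1P[<- _ _|A_gt0 _ /(_ A_gt0) B_gt0].
  by rewrite !mul0r sqrtr0 subr0 mulr0.
set s := Num.sqrt (B / A).
have s_gt0 : 0 < s by rewrite sqrtr_gt0 divr_gt0.
have ln_AB : ln (A / B) = - (ln s + ln s).
  by rewrite -lnM // -expr2 sqr_sqrtr ?divr_ge0 ?ltW // -lnV ?posrE ?divr_gt0 // invf_div.
have sqrt_AB : Num.sqrt (A * B) = A * s.
  rewrite (_ : A * B = A ^+ 2 * (B / A)); last by field; rewrite gt_eqF.
  by rewrite sqrtrM ?sqr_ge0 // sqrtr_sqr gtr0_norm.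
rewrite ln_AB sqrt_AB; have := ln_le_subr1 s_gt0.
by move: (ln s) => l; nra.
Qed.

Lemma sqr_sub_le_sqr_sub_sqrt (A B : R) : 0 <= A <= 1 -> 0 <= B <= 1 ->
  (A - B) ^+ 2 <= 4 * (Num.sqrt A - Num.sqrt B) ^+ 2.
Proof.
move=> /andP[A_ge0 A_le1] /andP[B_ge0 B_le1].
have sA_le1 : Num.sqrt A <= 1 by rewrite -sqrtr1 ler_sqrt.
have sB_le1 : Num.sqrt B <= 1 by rewrite -sqrtr1 ler_sqrt.
rewrite -{1}(sqr_sqrtr A_ge0) -{1}(sqr_sqrtr B_ge0).
move: (sqrtr_ge0 A) (sqrtr_ge0 B) sA_le1 sB_le1.
move: (Num.sqrt A) (Num.sqrt B) => u v u_ge0 v_ge0 u_le1 v_le1.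
have -> : (u ^+ 2 - v ^+ 2) ^+ 2 = (u - v) ^+ 2 * (u + v) ^+ 2 by ring.
rewrite [leRHS]mulrC ler_wpM2l ?sqr_ge0 //.
have -> : (4 : R) = 2 ^+ 2 by rewrite expr2; lra.
by rewrite ler_sqr ?nnegrE; lra.
Qed.

Lemma ler_sum_term (I : finType) (F : I -> R) (i : I) :
  (forall j, 0 <= F j) -> F i <= \sum_j F j.
Proof. by move=> F_ge0; rewrite (bigD1 i) //= lerDl sumr_ge0. Qed.

Lemma sum_sub_le_sum_mul_ln_div (I : finType) (u v : I -> R) :
  (forall i, 0 <= u i) -> (forall i, 0 <= v i) -> (forall i, 0 < u i -> 0 < v i) ->
  \sum_i (u i - v i) <= \sum_i u i * ln (u i / v i).
Proof.
move=> u_ge0 v_ge0 uv; apply: ler_sum => i _.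
exact: sub_le_mul_ln_div (u_ge0 i) (v_ge0 i) (@uv i).
Qed.

Lemma powR_mul_powR_le (a t u v : R) : 1 < a -> 0 <= t -> 0 <= u ->
  (0 < u -> 0 < v) -> u <= v * (1 + t) ->
  u `^ a * v `^ (1 - a) <= u * (1 + t) `^ (a - 1).
Proof.
move=> a_gt1 t_ge0; rewrite le_eqVlt => /predU1P[<- _ _|u_gt0 /(_ u_gt0) v_gt0 le_uv].
  by rewrite powR0 ?gt_eqF ?mul0r //; lra.
have t1_gt0 : 0 < 1 + t by lra.
rewrite -ler_ln ?posrE ?mulr_gt0 ?powR_gt0 // !lnM ?posrE ?powR_gt0 // !ln_powR.
have : ln u <= ln v + ln (1 + t) by rewrite -lnM ?ler_ln ?posrE ?mulr_gt0.
by move: (ln u) (ln v) (ln (1 + t)) => lu lv lt; nra.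
Qed.

Lemma renyi_sum_ln_le (I : finType) (a t : R) (u v : I -> R) :
  1 < a -> 0 <= t -> \sum_i u i = 1 -> (forall i, 0 <= u i) ->
  (forall i, 0 < u i -> 0 < v i) -> (forall i, u i <= v i * (1 + t)) ->
  (a - 1)^-1 * ln (\sum_i u i `^ a * v i `^ (1 - a)) <= t.
Proof.
move=> a_gt1 t_ge0 u_sum1 u_ge0 uv le_uv.
set S := \sum_i _.
have S_le : S <= (1 + t) `^ (a - 1).
  rewrite (_ : _ `^ _ = \sum_i u i * (1 + t) `^ (a - 1)); last first.
    by rewrite -mulr_suml u_sum1 mul1r.
  apply: ler_sum => i _.
  exact: powR_mul_powR_le a_gt1 t_ge0 (u_ge0 i) (@uv i) (le_uv i).
have ln_S_le : ln S <= (a - 1) * t.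
  have [S_le0|S_gt0] := lerP S 0; first by rewrite ln0 // mulr_ge0 // subr_ge0 ltW.
  apply: le_trans (_ : ln ((1 + t) `^ (a - 1)) <= _).
    by rewrite ler_ln ?posrE ?powR_gt0 //; lra.
  rewrite ln_powR; apply: ler_wpM2l; first by rewrite subr_ge0 ltW.
  apply: le_ln1Dx; lra.
by rewrite mulrC ler_pdivrMr ?subr_gt0 // mulrC.
Qed.

Lemma exists_pos_lbound (I : finType) (P : pred I) (f : I -> R) :
  (forall i, P i -> 0 < f i) -> exists2 m : R, 0 < m & forall i, P i -> m <= f i.
Proof.
move=> f_gt0; set s := \sum_(i | P i) (f i)^-1.
have inv_ge0 j : P j -> 0 <= (f j)^-1 by move/f_gt0/ltW; rewrite invr_ge0.
have s_ge0 : 0 <= s by exact: sumr_ge0.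
exists (1 + s)^-1 => [|i Pi]; first by rewrite invr_gt0; lra.
rewrite -[f i]invrK lef_pV2 ?posrE ?invr_gt0 ?f_gt0 //; last lra.
have : (f i)^-1 <= s.
  by rewrite /s (bigD1 i) //= lerDl sumr_ge0 // => j /andP[/inv_ge0].
lra.
Qed.

Lemma cvg_nondecreasing_gap (u : R ^nat) (L C : R) :
  {homo u : m n / (m <= n)%N >-> m <= n} -> (forall n, u n <= L) ->
  (forall n, L <= u n.+1 + C * Num.sqrt (u n.+1 - u n)) ->
  u n @[n --> \oo] --> L.
Proof.
move=> u_nd u_le gap.
have u_cvg : cvgn u.
  by apply: nondecreasing_is_cvgn => //; exists L => _ [n _ <-].
have uS_cvg : u n.+1 @[n --> \oo] --> limn u.
  by have := cvg_shiftS u (nbhs (limn u)); rewrite /= => ->.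
have gap_cvg : (u n.+1 + C * Num.sqrt (u n.+1 - u n)) @[n --> \oo] --> limn u.
  rewrite -[X in _ --> X]addr0 -(mulr0 C) -sqrtr0 -(subrr (limn u)).
  apply: cvgD => //; apply: cvgMr.
  by apply: continuous_cvg; [exact: sqrt_continuous | exact: cvgB].
suff <- : limn u = L by [].
apply/eqP; rewrite eq_le; apply/andP; split.
  by apply: limr_le => //; exact: nearW.
rewrite -(cvg_lim _ gap_cvg) //; apply: limr_ge; first exact: cvgP gap_cvg.
exact: nearW.
Qed.

End Preliminaries.

Section AlternatingOptimization.
Variables (R : realType) (X Y : finType) (a : R) (p : X -> R) (W q0 : X -> Y -> R).
Hypotheses (a_gt1 : 1 < a) (p_prob : probvec p) (W_channel : channel W)
  (q0_channel : channel q0).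
Variable mu : R.
Hypotheses (mu_gt0 : 0 < mu)
  (mu_le_q0 : forall x y, 0 < p x -> 0 < W x y -> mu <= q0 x y)
  (mu_le_powR : forall x y, 0 < p x -> 0 < W x y -> mu <= (W x y * p x) `^ a).

Local Notation q := (qiter a p W q0).
Local Notation r := (riter a p W q0).
Local Notation b := (1 - a^-1).

Definition marginal k y := \sum_x p x * q k x y.
Definition normalizer k x := \sum_y W x y * r k x y `^ b.

Lemma qiterS k x y : q k.+1 x y = W x y * r k x y `^ b / normalizer k x.
Proof. by []. Qed.

Lemma riterE k x y : r k x y = p x * q k x y / marginal k y.
Proof. by []. Qed.

Lemma a_neq0 : a != 0. Proof. by rewrite gt_eqF // (lt_trans ltr01). Qed.
Lemma a_sub1_neq0 : a - 1 != 0. Proof. by rewrite subr_eq0 gt_eqF. Qed.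
Lemma one_sub_a_neq0 : 1 - a != 0. Proof. by rewrite subr_eq0 lt_eqF. Qed.

Lemma b_ge0 : 0 <= b.
Proof. by rewrite subr_ge0 invf_le1 ?ltW // (lt_trans ltr01). Qed.

Lemma b_le1 : b <= 1.
Proof. by rewrite gerBl invr_ge0 ltW // (lt_trans ltr01). Qed.

Lemma p_ge0 x : 0 <= p x. Proof. exact: p_prob.1 x. Qed.
Lemma W_ge0 x y : 0 <= W x y. Proof. exact: (W_channel x).1. Qed.

Lemma p_le1 x : p x <= 1.
Proof. by rewrite -p_prob.2 (ler_sum_term x p_ge0). Qed.

Lemma p_eq0 x : ~~ (0 < p x) -> p x = 0.
Proof. by move=> px; apply/eqP; rewrite eq_le p_ge0 andbT leNgt. Qed.

Lemma exists_W_gt0 x : exists y, 0 < W x y.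
Proof.
have : \sum_y W x y <> 0 by rewrite (W_channel x).2; exact/eqP/oner_neq0.
by case/(psumr_neq0P (fun y _ => W_ge0 x y)) => y /andP[_ Wy]; exists y.
Qed.

Lemma support_cases x y :
  p x = 0 \/ (0 < p x /\ W x y = 0) \/ (0 < p x /\ 0 < W x y).
Proof.
have [px|/p_eq0] := boolP (0 < p x); last by left.
by right; case: (ltrgt0P (W x y)) (W_ge0 x y) => [Wy|Wy|->] //; [right|left].
Qed.

Lemma sum_r_le1 k y : \sum_x r k x y <= 1.
Proof.
rewrite /riter /revch -mulr_suml -/(marginal k y).
by have [->|P_neq0] := eqVneq (marginal k y) 0; rewrite ?invr0 ?mulr0 ?divff.
Qed.

Lemma normalizer_ge0 k x : 0 <= normalizer k x.
Proof. by apply: sumr_ge0 => y _; rewrite mulr_ge0 ?W_ge0 ?powR_ge0. Qed.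

Definition iter_bounded k := [/\ forall x y, 0 <= q k x y,
  forall x, 0 < p x -> \sum_y q k x y = 1 &
  forall x y, 0 < p x -> 0 < W x y -> mu <= q k x y].

Section IterBounded.
Variable k : nat.
Hypothesis hk : iter_bounded k.

Lemma q_ge0 x y : 0 <= q k x y. Proof. by case: hk. Qed.

Lemma q_sum1 x : 0 < p x -> \sum_y q k x y = 1. Proof. by case: hk => _ + _; apply. Qed.

Lemma q_ge_mu x y : 0 < p x -> 0 < W x y -> mu <= q k x y.
Proof. by case: hk => _ _; apply. Qed.

Lemma q_gt0 x y : 0 < p x -> 0 < W x y -> 0 < q k x y.
Proof. by move=> px Wy; exact: lt_le_trans mu_gt0 (q_ge_mu px Wy). Qed.

Lemma q_le1 x y : 0 < p x -> q k x y <= 1.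
Proof. by move=> px; rewrite -(q_sum1 px) (ler_sum_term y (q_ge0 x)). Qed.

Lemma pq_ge0 x y : 0 <= p x * q k x y.
Proof. by rewrite mulr_ge0 ?p_ge0 ?q_ge0. Qed.

Lemma pq_le_p x y : p x * q k x y <= p x.
Proof.
have [px|/p_eq0->] := boolP (0 < p x); last by rewrite mul0r.
by rewrite ler_piMr ?p_ge0 ?q_le1.
Qed.

Lemma marginal_ge0 y : 0 <= marginal k y.
Proof. by apply: sumr_ge0 => x _; exact: pq_ge0. Qed.

Lemma marginal_le1 y : marginal k y <= 1.
Proof. by rewrite -p_prob.2; apply: ler_sum => x _; exact: pq_le_p. Qed.

Lemma pq_le_marginal x y : p x * q k x y <= marginal k y.
Proof. exact: (ler_sum_term x (fun x => pq_ge0 x y)). Qed.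

Lemma r_ge0 x y : 0 <= r k x y.
Proof. by rewrite riterE divr_ge0 ?pq_ge0 ?marginal_ge0. Qed.

Lemma pq_le_r x y : p x * q k x y <= r k x y.
Proof.
have [P0|P_gt0] := eqVneq (marginal k y) 0.
  by apply: le_trans (r_ge0 x y); rewrite -P0 pq_le_marginal.
rewrite riterE ler_pdivlMr ?lt_def ?P_gt0 ?marginal_ge0 //.
by rewrite ler_piMr ?pq_ge0 ?marginal_le1.
Qed.

Lemma r_le1 x y : r k x y <= 1.
Proof.
rewrite riterE; have [->|P_gt0] := eqVneq (marginal k y) 0; first by rewrite invr0 mulr0.
by rewrite ler_pdivrMr ?lt_def ?P_gt0 ?marginal_ge0 // mul1r pq_le_marginal.
Qed.

Lemma r_gt0 x y : 0 < p x -> 0 < W x y -> 0 < r k x y.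
Proof. by move=> px Wy; apply: lt_le_trans (pq_le_r x y); rewrite mulr_gt0 ?q_gt0. Qed.

Lemma normalizer_le1 x : normalizer k x <= 1.
Proof.
rewrite -(W_channel x).2; apply: ler_sum => y _; rewrite ler_piMr ?W_ge0 //.
have := @ge0_ler_powR R b b_ge0 (r k x y) 1; rewrite !nnegrE powR1.
by apply; rewrite ?r_ge0 ?r_le1.
Qed.

Lemma normalizer_gt0 x : 0 < p x -> 0 < normalizer k x.
Proof.
move=> px; have [y Wy] := exists_W_gt0 x.
apply: lt_le_trans (ler_sum_term y (fun y => mulr_ge0 (W_ge0 x y) (powR_ge0 _ _))).
by rewrite mulr_gt0 // powR_gt0 // r_gt0.
Qed.

End IterBounded.

(* The role of [mu_le_powR]: [mu ^ (1/a) <= W p] keeps [mu] a lower bound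
   through the update. *)
Lemma mu_le_update x y : 0 < p x -> 0 < W x y -> mu <= W x y * (p x * mu) `^ b.
Proof.
move=> px Wy; rewrite powRM ?p_ge0 ?(ltW mu_gt0) // mulrA.
have Wp_le : W x y * p x <= W x y * p x `^ b.
  by rewrite ler_wpM2l ?W_ge0 // ger1_powR ?px ?p_le1 ?b_le1.
apply: le_trans (ler_wpM2r (powR_ge0 _ _) Wp_le).
have Wp_gt0 : 0 < W x y * p x by rewrite mulr_gt0.
have := mu_le_powR px Wy; move: Wp_gt0; set c := W x y * p x => c_gt0 mu_le_c.
rewrite -ler_ln ?posrE ?mulr_gt0 ?powR_gt0 // lnM ?posrE ?powR_gt0 // ln_powR.
have : ln mu <= a * ln c by rewrite -ln_powR ler_ln ?posrE ?powR_gt0.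
have ai_ge0 : 0 <= a^-1 by rewrite invr_ge0 ltW // (lt_trans ltr01).
by move/(ler_wpM2l ai_ge0); rewrite mulrA mulVf ?a_neq0 // mul1r; lra.
Qed.

Lemma iter_bounded_step k : iter_bounded k -> iter_bounded k.+1.
Proof.
move=> hk; split => [x y|x px|x y px Wy]; rewrite ?qiterS.
- by rewrite divr_ge0 ?normalizer_ge0 ?mulr_ge0 ?W_ge0 ?powR_ge0.
- by under eq_bigr do rewrite qiterS; rewrite -mulr_suml divff // gt_eqF ?normalizer_gt0.
apply: le_trans (mu_le_update px Wy) _.
apply: le_trans (_ : W x y * r k x y `^ b <= _).
  rewrite ler_wpM2l ?W_ge0 // ge0_ler_powR ?nnegrE ?b_ge0 ?r_ge0 //.
    by rewrite mulr_ge0 ?p_ge0 ?ltW.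
  by apply: le_trans (pq_le_r hk x y); rewrite ler_wpM2l ?p_ge0 ?q_ge_mu.
rewrite ler_pdivlMr ?normalizer_gt0 // ler_piMr ?normalizer_le1 //.
by rewrite mulr_ge0 ?W_ge0 ?powR_ge0.
Qed.

Lemma iter_boundedP k : iter_bounded k.
Proof.
elim: k => [|k]; last exact: iter_bounded_step.
split=> [x y|x _|]; [exact: (q0_channel x).1 | exact: (q0_channel x).2 |].
exact: mu_le_q0.
Qed.

Lemma qS_eq0 k x y : W x y = 0 -> q k.+1 x y = 0.
Proof. by move=> Wy; rewrite qiterS Wy !mul0r. Qed.

Lemma qS_gt0_W_gt0 k x y : 0 < q k.+1 x y -> 0 < W x y.
Proof.
by case: (ltrgt0P (W x y)) (W_ge0 x y) => // /qS_eq0 ->; rewrite ltxx.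
Qed.

Lemma pqS_gt0_supp k x y : 0 < p x * q k.+1 x y -> 0 < p x /\ 0 < W x y.
Proof.
case: (support_cases x y) => [->|[[_ /(qS_eq0 k)->]|//]].
  by rewrite mul0r ltxx.
by rewrite mulr0 ltxx.
Qed.

Lemma marginal_gt0 k x y : 0 < p x -> 0 < W x y -> 0 < marginal k y.
Proof.
move=> px Wy; apply: lt_le_trans (pq_le_marginal (iter_boundedP k) x y).
by rewrite mulr_gt0 // (q_gt0 (iter_boundedP k)).
Qed.

Lemma sum_marginal k : \sum_y marginal k y = 1.
Proof.
rewrite exchange_big -p_prob.2; apply: eq_bigr => x _.
have [px|/p_eq0->] := boolP (0 < p x); last by rewrite big1 // => y _; rewrite mul0r.
by rewrite -mulr_sumr (q_sum1 (iter_boundedP k)) ?mulr1.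
Qed.

Lemma sum_pq_mulr k (f : X -> R) :
  \sum_x \sum_y p x * q k x y * f x = \sum_x p x * f x.
Proof.
apply: eq_bigr => x _.
have [px|/p_eq0->] := boolP (0 < p x); last by rewrite mul0r big1 // => y _; rewrite !mul0r.
by rewrite -mulr_suml -mulr_sumr (q_sum1 (iter_boundedP k)) ?mulr1.
Qed.

Lemma ln_qS k x y : 0 < p x -> 0 < W x y ->
  ln (q k.+1 x y) = ln (W x y) + b * ln (r k x y) - ln (normalizer k x).
Proof.
move=> px Wy; have hk := iter_boundedP k.
rewrite qiterS ln_div ?posrE ?mulr_gt0 ?powR_gt0 ?(r_gt0 hk) ?(normalizer_gt0 hk) //.
by rewrite lnM ?posrE ?powR_gt0 ?(r_gt0 hk) // ln_powR.
Qed.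

Lemma ln_r k x y : 0 < p x -> 0 < W x y ->
  ln (r k x y) = ln (p x) + ln (q k x y) - ln (marginal k y).
Proof.
move=> px Wy; have hk := iter_boundedP k.
rewrite riterE ln_div ?posrE ?mulr_gt0 ?(q_gt0 hk) ?(marginal_gt0 k px Wy) //.
by rewrite lnM ?posrE ?(q_gt0 hk).
Qed.

Definition objective k :=
  \sum_x p x * (a / (a - 1) * ln (normalizer k x) - ln (p x)).

Lemma FC_termE k x y :
  a / (1 - a) * (p x * q k.+1 x y * ln (q k.+1 x y / W x y)) +
  p x * q k.+1 x y * ln (r k x y / p x) =
  p x * q k.+1 x y * (a / (a - 1) * ln (normalizer k x) - ln (p x)).
Proof.
case: (support_cases x y) => [->|[[px /(qS_eq0 k)->]|[px Wy]]].
- by rewrite !mul0r mulr0 add0r.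
- by rewrite !(mulr0, mul0r) addr0.
rewrite ln_div ?posrE ?(q_gt0 (iter_boundedP k.+1)) //.
rewrite ln_div ?posrE ?(r_gt0 (iter_boundedP k)) // (ln_qS k px Wy).
move: (ln (W x y)) (ln (r k x y)) (ln (normalizer k x)) (ln (p x)) => lW lr lZ lp.
by field; rewrite ?a_neq0 ?a_sub1_neq0 ?one_sub_a_neq0.
Qed.

Lemma FC_objective k : FC a p W (q k.+1) (r k) = objective k.
Proof.
rewrite /objective -(sum_pq_mulr k.+1) /FC /KLjoint mulr_sumr -big_split.
apply: eq_bigr => x _; rewrite mulr_sumr -big_split.
by apply: eq_bigr => y _; exact: FC_termE.
Qed.

Lemma sum_pq k : \sum_x \sum_y p x * q k x y = 1.
Proof. by rewrite exchange_big; exact: sum_marginal. Qed.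

Lemma joint_kl_ge0 k (Q : Y -> R) : (forall y, 0 <= Q y) -> \sum_y Q y = 1 ->
  (forall x y, 0 < p x -> 0 < W x y -> 0 < Q y) ->
  0 <= \sum_x \sum_y p x * q k.+1 x y * ln (p x * q k.+1 x y / (Q y * r k x y)).
Proof.
move=> Q_ge0 Q_sum1 Q_gt0; have hk := iter_boundedP k.
apply: le_trans (_ : 0 <= \sum_x \sum_y (p x * q k.+1 x y - Q y * r k x y)) _.
  under eq_bigr do rewrite sumrB.
  rewrite sumrB sum_pq subr_ge0 exchange_big /= -Q_sum1.
  by apply: ler_sum => y _; rewrite -mulr_sumr ler_piMr ?Q_ge0 ?sum_r_le1.
apply: ler_sum => x _.
apply: (sum_sub_le_sum_mul_ln_div (u := fun y => _) (v := fun y => Q y * r k x y)).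
- by move=> y; exact: (pq_ge0 (iter_boundedP k.+1)).
- by move=> y; rewrite mulr_ge0 ?Q_ge0 ?(r_ge0 hk).
- by move=> y /pqS_gt0_supp [px Wy]; rewrite mulr_gt0 ?(Q_gt0 x y px Wy) ?(r_gt0 hk px Wy).
Qed.

Definition renyi_sum (Q : Y -> R) x := \sum_y W x y `^ a * Q y `^ (1 - a).

Lemma sum_renyiE (Q : Y -> R) : (forall x y, 0 < p x -> 0 < W x y -> 0 < Q y) ->
  (\sum_x (p x)%:E * renyi a (W x) Q)%E =
  (\sum_x p x * ((a - 1)^-1 * ln (renyi_sum Q x)))%:E.
Proof.
move=> Q_gt0; rewrite -sumEFin; apply: eq_bigr => x _.
have [px|/p_eq0->] := boolP (0 < p x); last by rewrite mul0e mul0r.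
rewrite /renyi ifF ?EFinM //; apply/existsP => -[y /andP[Wy /eqP Qy]].
by have := Q_gt0 x y px Wy; rewrite Qy ltxx.
Qed.

Section UpperBound.
Variable Q : Y -> R.
Hypotheses (Q_ge0 : forall y, 0 <= Q y) (Q_sum1 : \sum_y Q y = 1)
  (Q_gt0 : forall x y, 0 < p x -> 0 < W x y -> 0 < Q y).

Lemma renyi_sum_gt0 x : 0 < p x -> 0 < renyi_sum Q x.
Proof.
move=> px; have [y Wy] := exists_W_gt0 x.
apply: lt_le_trans (ler_sum_term y (fun y => mulr_ge0 (powR_ge0 _ _) (powR_ge0 _ _))).
by rewrite mulr_gt0 ?powR_gt0 ?(Q_gt0 px).
Qed.

Definition tilted x y := W x y `^ a * Q y `^ (1 - a) / renyi_sum Q x.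

Lemma tilted_kl_ge0 k x : 0 < p x ->
  0 <= \sum_y q k.+1 x y * ln (q k.+1 x y / tilted x y).
Proof.
move=> px; have hk1 := iter_boundedP k.+1; have T_gt0 := renyi_sum_gt0 px.
apply: le_trans (_ : 0 <= \sum_y (q k.+1 x y - tilted x y)) _.
  by rewrite sumrB (q_sum1 hk1 px) -mulr_suml divff ?gt_eqF // subrr.
apply: (sum_sub_le_sum_mul_ln_div (u := q k.+1 x) (v := tilted x)).
- exact: q_ge0.
- by move=> y; rewrite divr_ge0 ?mulr_ge0 ?powR_ge0 ?ltW.
- by move=> y /qS_gt0_W_gt0 Wy; rewrite divr_gt0 ?mulr_gt0 ?powR_gt0 ?(Q_gt0 px).
Qed.

Lemma objective_gap_termE k x y :
  p x * q k.+1 x y * ((a - 1)^-1 * ln (renyi_sum Q x)) -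
  p x * q k.+1 x y * (a / (a - 1) * ln (normalizer k x) - ln (p x)) =
  (a - 1)^-1 * (p x * (q k.+1 x y * ln (q k.+1 x y / tilted x y))) +
  p x * q k.+1 x y * ln (p x * q k.+1 x y / (Q y * r k x y)).
Proof.
case: (support_cases x y) => [->|[[px /(qS_eq0 k)->]|[px Wy]]].
- by rewrite !(mul0r, mulr0, subr0, addr0).
- by rewrite !(mul0r, mulr0, subr0, addr0).
have := ln_qS k px Wy; have := q_gt0 (iter_boundedP k.+1) px Wy.
have := r_gt0 (iter_boundedP k) px Wy; have := Q_gt0 px Wy.
have := renyi_sum_gt0 px; rewrite /tilted.
move: (q k.+1 x y) (r k x y) (renyi_sum Q x) => qv rv T T_gt0 Qy_gt0 rv_gt0 qv_gt0 ln_qv.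
rewrite !ln_div ?posrE ?divr_gt0 ?mulr_gt0 ?powR_gt0 //.
rewrite !lnM ?posrE ?powR_gt0 // !ln_powR ln_qv.
move: (ln (W x y)) (ln rv) (ln (normalizer k x)) (ln (p x)) (ln (Q y)) (ln T).
by move=> lW lr lZ lp lQ lT; field; rewrite ?a_neq0 ?a_sub1_neq0 ?one_sub_a_neq0.
Qed.

Lemma objective_le_renyi k :
  objective k <= \sum_x p x * ((a - 1)^-1 * ln (renyi_sum Q x)).
Proof.
rewrite -subr_ge0 /objective -!(sum_pq_mulr k.+1) -sumrB.
under eq_bigr do rewrite -sumrB.
under eq_bigr do under eq_bigr do rewrite objective_gap_termE.
under eq_bigr do rewrite big_split.
rewrite big_split /= addr_ge0 ?joint_kl_ge0 //.
apply: sumr_ge0 => x _; rewrite -!mulr_sumr mulr_ge0 //.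
  by rewrite invr_ge0 subr_ge0 ltW.
have [px|/p_eq0->] := boolP (0 < p x); last by rewrite mul0r.
by rewrite mulr_ge0 ?p_ge0 ?tilted_kl_ge0.
Qed.

End UpperBound.

Lemma objective_le_IC k : ((objective k)%:E <= IC a p W)%E.
Proof.
apply/ereal_infP => _ [Q [Q_ge0 Q_sum1] <-].
have [[x [px [y [Wy Qy]]]]|Q_supp] :=
  pselect (exists x, 0 < p x /\ exists y, 0 < W x y /\ Q y = 0).
  suff -> : (\sum_x (p x)%:E * renyi a (W x) Q)%E = +oo%E by rewrite leey.
  have renyi_x : renyi a (W x) Q = +oo%E.
    by rewrite /renyi ifT //; apply/existsP; exists y; rewrite Wy Qy eqxx.
  apply/esum_eqyP; last by exists x; rewrite renyi_x gt0_muley ?lte_fin.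
  move=> i _; rewrite /renyi; case: ifP => _; last by rewrite -EFinM.
  have := p_ge0 i; rewrite le_eqVlt => /predU1P[<-|pi]; first by rewrite mul0e.
  by rewrite gt0_muley ?lte_fin.
have Q_pos x y : 0 < p x -> 0 < W x y -> 0 < Q y.
  move=> px Wy; have := Q_ge0 y; rewrite le_eqVlt => /predU1P[/esym Qy|//].
  by case: Q_supp; exists x; split => //; exists y.
by rewrite sum_renyiE // lee_fin objective_le_renyi.
Qed.

Definition step_renyi_sum k x :=
  \sum_y q k.+2 x y `^ a * q k.+1 x y `^ (1 - a).

Definition step_renyi k := \sum_x p x * ((a - 1)^-1 * ln (step_renyi_sum k x)).

(* Solve the update rule for [W] and use [a * (1 - 1/a) = a - 1]. *)
Lemma renyi_sum_marginal_termE k x y : 0 < p x ->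
  W x y `^ a * marginal k.+1 y `^ (1 - a) =
  normalizer k.+1 x `^ a * p x `^ (1 - a) * (q k.+2 x y `^ a * q k.+1 x y `^ (1 - a)).
Proof.
move=> px; case: (support_cases x y) => [p0|[[_ Wy]|[_ Wy]]].
- by move: px; rewrite p0 ltxx.
- by rewrite Wy (qS_eq0 k.+1 Wy) !powR0 ?a_neq0 // !(mul0r, mulr0).
have := q_gt0 (iter_boundedP k.+1) px Wy; have := q_gt0 (iter_boundedP k.+2) px Wy.
have := marginal_gt0 k.+1 px Wy; have := normalizer_gt0 (iter_boundedP k.+1) px.
have := ln_qS k.+1 px Wy; have := ln_r k.+1 px Wy.
move: (q k.+2 x y) (q k.+1 x y) (r k.+1 x y) (marginal k.+1 y) (normalizer k.+1 x).
move=> q2 q1 rv P Z ln_rv ln_q2 Z_gt0 P_gt0 q2_gt0 q1_gt0.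
apply: ln_inj; rewrite ?posrE ?mulr_gt0 ?powR_gt0 //.
rewrite !lnM ?posrE ?mulr_gt0 ?powR_gt0 // !ln_powR ln_q2 ln_rv.
by field; rewrite ?a_neq0 ?a_sub1_neq0 ?one_sub_a_neq0.
Qed.

Lemma step_renyi_sum_gt0 k x : 0 < p x -> 0 < step_renyi_sum k x.
Proof.
move=> px; have [y Wy] := exists_W_gt0 x.
apply: lt_le_trans (ler_sum_term y (fun y => mulr_ge0 (powR_ge0 _ _) (powR_ge0 _ _))).
by rewrite mulr_gt0 ?powR_gt0 ?(q_gt0 (iter_boundedP k.+1)) ?(q_gt0 (iter_boundedP k.+2)).
Qed.

Lemma renyi_sum_marginalE k x :
  p x * ((a - 1)^-1 * ln (renyi_sum (marginal k.+1) x)) =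
  p x * (a / (a - 1) * ln (normalizer k.+1 x) - ln (p x)) +
  p x * ((a - 1)^-1 * ln (step_renyi_sum k x)).
Proof.
have [px|/p_eq0->] := boolP (0 < p x); last by rewrite !mul0r addr0.
have -> : renyi_sum (marginal k.+1) x =
    normalizer k.+1 x `^ a * p x `^ (1 - a) * step_renyi_sum k x.
  by rewrite mulr_sumr; apply: eq_bigr => y _; rewrite renyi_sum_marginal_termE.
have := normalizer_gt0 (iter_boundedP k.+1) px; have := step_renyi_sum_gt0 k px.
move: (normalizer k.+1 x) (step_renyi_sum k x) => Z S S_gt0 Z_gt0.
rewrite !lnM ?posrE ?mulr_gt0 ?powR_gt0 // !ln_powR.
by field; rewrite ?a_neq0 ?a_sub1_neq0 ?one_sub_a_neq0.
Qed.

Lemma IC_le_objectiveS k : (IC a p W <= (objective k.+1 + step_renyi k)%:E)%E.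
Proof.
apply: ereal_inf_lbound; exists (marginal k.+1).
  by split; [exact: marginal_ge0 (iter_boundedP k.+1) | exact: sum_marginal].
rewrite sum_renyiE => [|x y px Wy]; last exact: marginal_gt0 px Wy.
by congr (_%:E); rewrite -big_split; apply: eq_bigr => x _; exact: renyi_sum_marginalE.
Qed.

Definition step_kl k x := \sum_y q k.+1 x y * ln (q k.+1 x y / q k.+2 x y).

Lemma objective_incr_termE k x y :
  p x * q k.+1 x y * (a / (a - 1) * ln (normalizer k.+1 x) - ln (p x)) -
  p x * q k.+1 x y * (a / (a - 1) * ln (normalizer k x) - ln (p x)) =
  p x * q k.+1 x y * ln (p x * q k.+1 x y / (marginal k.+1 y * r k x y)) +
  a / (a - 1) * (p x * (q k.+1 x y * ln (q k.+1 x y / q k.+2 x y))).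
Proof.
case: (support_cases x y) => [->|[[px /(qS_eq0 k)->]|[px Wy]]].
- by rewrite !(mul0r, mulr0, subr0, addr0).
- by rewrite !(mul0r, mulr0, subr0, addr0).
have := q_gt0 (iter_boundedP k.+1) px Wy; have := q_gt0 (iter_boundedP k.+2) px Wy.
have := r_gt0 (iter_boundedP k) px Wy; have := marginal_gt0 k.+1 px Wy.
have := ln_qS k px Wy; have := ln_qS k.+1 px Wy; have := ln_r k.+1 px Wy.
move: (q k.+2 x y) (q k.+1 x y) (r k.+1 x y) (r k x y) (marginal k.+1 y).
move=> q2 q1 r1 r0 P ln_r1 ln_q2 ln_q1 P_gt0 r0_gt0 q2_gt0 q1_gt0.
rewrite !ln_div ?posrE ?mulr_gt0 // !lnM ?posrE // ln_q2 ln_q1.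
have -> : ln P = ln (p x) + ln q1 - ln r1 by rewrite ln_r1; ring.
rewrite ln_q1.
by field; rewrite ?a_neq0 ?a_sub1_neq0 ?one_sub_a_neq0.
Qed.

Lemma objective_incrE k : objective k.+1 - objective k =
  \sum_x \sum_y p x * q k.+1 x y * ln (p x * q k.+1 x y / (marginal k.+1 y * r k x y)) +
  a / (a - 1) * \sum_x p x * step_kl k x.
Proof.
set S := \sum_x p x * step_kl k x.
rewrite /objective -!(sum_pq_mulr k.+1) -sumrB.
under eq_bigr do rewrite -sumrB.
under eq_bigr do under eq_bigr do rewrite objective_incr_termE.
under eq_bigr do rewrite big_split.
rewrite big_split /S mulr_sumr; congr (_ + _); apply: eq_bigr => x _.
by rewrite /step_kl !mulr_sumr.
Qed.

Lemma sum_sqr_sub_sqrt_le_step_kl k x : 0 < p x ->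
  \sum_y (Num.sqrt (q k.+1 x y) - Num.sqrt (q k.+2 x y)) ^+ 2 <= step_kl k x.
Proof.
move=> px; have hk1 := iter_boundedP k.+1; have hk2 := iter_boundedP k.+2.
have sum_diff0 : \sum_y (q k.+1 x y - q k.+2 x y) = 0.
  by rewrite sumrB (q_sum1 hk1 px) (q_sum1 hk2 px) subrr.
have -> : \sum_y (Num.sqrt (q k.+1 x y) - Num.sqrt (q k.+2 x y)) ^+ 2 =
    \sum_y 2 * (q k.+1 x y - Num.sqrt (q k.+1 x y * q k.+2 x y)).
  rewrite -[LHS]addr0 -[X in _ + X]sum_diff0 -big_split; apply: eq_bigr => y _.
  exact: sqr_sub_sqrt_addE (q_ge0 hk1 x y) (q_ge0 hk2 x y).
apply: ler_sum => y _; apply: sub_sqrt_le_mul_ln_div; rewrite ?(q_ge0 hk1) ?(q_ge0 hk2) //.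
by move/qS_gt0_W_gt0 => Wy; exact: (q_gt0 hk2 px Wy).
Qed.

Lemma step_kl_ge0 k x : 0 < p x -> 0 <= step_kl k x.
Proof.
move=> px; apply: le_trans (sum_sqr_sub_sqrt_le_step_kl k px).
by apply: sumr_ge0 => y _; exact: sqr_ge0.
Qed.

Lemma sqr_sub_le_step_kl k x y : 0 < p x ->
  (q k.+1 x y - q k.+2 x y) ^+ 2 <= 4 * step_kl k x.
Proof.
move=> px; have hk1 := iter_boundedP k.+1; have hk2 := iter_boundedP k.+2.
apply: le_trans (sqr_sub_le_sqr_sub_sqrt _ _) _.
- by rewrite (q_ge0 hk1) (q_le1 hk1).
- by rewrite (q_ge0 hk2) (q_le1 hk2).
rewrite ler_wpM2l //; apply: le_trans (sum_sqr_sub_sqrt_le_step_kl k px).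
exact: (ler_sum_term y (fun y => sqr_ge0 _)).
Qed.

Lemma p_step_kl_ge0 k x : 0 <= p x * step_kl k x.
Proof.
by have [px|/p_eq0->] := boolP (0 < p x); rewrite ?mul0r // mulr_ge0 ?p_ge0 ?step_kl_ge0.
Qed.

Lemma sum_p_step_kl_le k : \sum_x p x * step_kl k x <= objective k.+1 - objective k.
Proof.
have D_ge0 := joint_kl_ge0 k (marginal_ge0 (iter_boundedP k.+1)) (sum_marginal k.+1)
  (fun x y => @marginal_gt0 k.+1 x y).
have S_ge0 : 0 <= \sum_x p x * step_kl k x by apply: sumr_ge0 => x _; exact: p_step_kl_ge0.
have a_div_ge1 : 1 <= a / (a - 1).
  by rewrite ler_pdivlMr ?subr_gt0 // mul1r gerBl.
rewrite objective_incrE -[leLHS]mul1r.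
exact: ler_wpDl D_ge0 (ler_wpM2r S_ge0 a_div_ge1).
Qed.

Lemma objective_le_succ k : objective k <= objective k.+1.
Proof.
rewrite -subr_ge0; apply: le_trans (sum_p_step_kl_le k).
by apply: sumr_ge0 => x _; exact: p_step_kl_ge0.
Qed.

Lemma p_step_kl_le k x : 0 < p x -> p x * step_kl k x <= objective k.+1 - objective k.
Proof.
move=> px; apply: le_trans (sum_p_step_kl_le k).
exact: (ler_sum_term x (p_step_kl_ge0 k)).
Qed.

Lemma p_step_diff_le k x y : 0 < p x ->
  p x * (q k.+2 x y - q k.+1 x y) <= 2 * Num.sqrt (objective k.+1 - objective k).
Proof.
move=> px; have d_ge0 : 0 <= objective k.+1 - objective k.
  by rewrite subr_ge0 objective_le_succ.
have [le0|gt0] := lerP (p x * (q k.+2 x y - q k.+1 x y)) 0.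
  by apply: le_trans le0 _; rewrite mulr_ge0 ?sqrtr_ge0.
rewrite -ler_sqr ?nnegrE ?(ltW gt0) ?mulr_ge0 ?sqrtr_ge0 // !exprMn sqr_sqrtr //.
rewrite -[(q k.+2 x y - _) ^+ 2]sqrrN opprB.
apply: le_trans (_ : p x ^+ 2 * (4 * step_kl k x) <= _).
  by rewrite ler_wpM2l ?sqr_ge0 ?sqr_sub_le_step_kl.
apply: le_trans (_ : 4 * (p x * step_kl k x) <= _); last first.
  by rewrite (_ : 2 ^+ 2 = 4 :> R) ?ler_wpM2l ?p_step_kl_le //; rewrite expr2; lra.
rewrite mulrCA expr2 -mulrA ler_wpM2l // ler_piMl ?p_le1 //.
by rewrite mulr_ge0 ?p_ge0 ?step_kl_ge0.
Qed.

Lemma q_step_le k x y : 0 < p x ->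
  q k.+2 x y <=
  q k.+1 x y * (1 + 2 * Num.sqrt (objective k.+1 - objective k) / (p x * mu)).
Proof.
move=> px; case: (support_cases x y) => [p0|[[_ Wy]|[_ Wy]]].
- by move: px; rewrite p0 ltxx.
- by rewrite !(qS_eq0 _ Wy) mul0r.
rewrite mulrDr mulr1 -lerBlDl; set s := Num.sqrt _.
apply: le_trans (_ : mu * (2 * s / (p x * mu)) <= _); last first.
  by rewrite ler_wpM2r ?divr_ge0 ?mulr_ge0 ?sqrtr_ge0 ?(q_ge_mu (iter_boundedP k.+1)) // ltW.
rewrite (_ : _ * (_ / _) = 2 * s / p x); last by field; rewrite !gt_eqF.
by rewrite ler_pdivlMr // mulrC p_step_diff_le.
Qed.

Lemma p_step_renyi_le k x : p x * ((a - 1)^-1 * ln (step_renyi_sum k x)) <=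
  2 / mu * Num.sqrt (objective k.+1 - objective k).
Proof.
have [px|/p_eq0->] := boolP (0 < p x); last first.
  by rewrite mul0r mulr_ge0 ?sqrtr_ge0 ?divr_ge0 ?ltW.
set t := 2 * Num.sqrt (objective k.+1 - objective k) / (p x * mu).
have t_ge0 : 0 <= t by rewrite divr_ge0 ?mulr_ge0 ?sqrtr_ge0 // ltW // mulr_gt0.
rewrite (_ : _ * Num.sqrt _ = p x * t); last by rewrite /t; field; rewrite !gt_eqF.
rewrite ler_wpM2l ?p_ge0 // /step_renyi_sum; apply: renyi_sum_ln_le => //.
- exact: (q_sum1 (iter_boundedP k.+2) px).
- exact: (q_ge0 (iter_boundedP k.+2) x).
- by move=> y /qS_gt0_W_gt0 Wy; exact: (q_gt0 (iter_boundedP k.+1) px Wy).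
- by move=> y; exact: q_step_le.
Qed.

Lemma step_renyi_le k :
  step_renyi k <= #|X|%:R * (2 / mu) * Num.sqrt (objective k.+1 - objective k).
Proof.
apply: le_trans (ler_sum _ (fun x _ => p_step_renyi_le k x)) _.
by rewrite sumr_const -[in leRHS]mulrA [in leRHS]mulr_natl.
Qed.

Lemma IC_fin_num : IC a p W \is a fin_num.
Proof.
rewrite fin_numElt (lt_le_trans (ltNyr _) (objective_le_IC 0)).
exact: (le_lt_trans (IC_le_objectiveS 0) (ltry _)).
Qed.

Lemma FC_cvg : (fun k => (FC a p W (q k.+1) (r k))%:E) @ \oo --> IC a p W.
Proof.
have -> : (fun k => (FC a p W (q k.+1) (r k))%:E) = (fun k => (objective k)%:E).
  by apply/funext => k; rewrite FC_objective.
rewrite -(fineK IC_fin_num); apply: cvg_EFin; first exact: nearW.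
apply: (cvg_nondecreasing_gap (u := objective) (C := #|X|%:R * (2 / mu))) => [|k|k].
- by apply/nondecreasing_seqP; exact: objective_le_succ.
- by rewrite -lee_fin fineK ?IC_fin_num ?objective_le_IC.
rewrite -lee_fin fineK ?IC_fin_num //; apply: le_trans (IC_le_objectiveS k) _.
by rewrite lee_fin lerD2l step_renyi_le.
Qed.

End AlternatingOptimization.

Theorem corollary3 (R : realType) (X Y : finType) (a : R) (p : X -> R)
    (W q0 : X -> Y -> R) :
  1 < a ->
  probvec p ->
  channel W ->
  channel q0 ->
  (forall x y, 0 < W x y -> 0 < q0 x y) ->
  (fun k : nat => (FC a p W (qiter a p W q0 k.+1) (riter a p W q0 k))%:E)
    @ \oo --> IC a p W.
Proof.
move=> a_gt1 p_prob W_channel q0_channel q0_supp.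
pose supp (t : X * Y) := (0 < p t.1) && (0 < W t.1 t.2).
pose lbound (t : X * Y) := Num.min (q0 t.1 t.2) ((W t.1 t.2 * p t.1) `^ a).
have [mu mu_gt0 mu_le] : exists2 mu : R, 0 < mu & forall t, supp t -> mu <= lbound t.
  apply: exists_pos_lbound => -[x y] /andP[/= px Wy].
  by rewrite lt_min q0_supp // powR_gt0 // mulr_gt0.
have mu_le_min x y : 0 < p x -> 0 < W x y -> mu <= lbound (x, y).
  by move=> px Wy; apply: mu_le; rewrite /supp /= px Wy.
apply: (FC_cvg a_gt1 p_prob W_channel q0_channel mu_gt0) => x y px Wy;
  by have := mu_le_min x y px Wy; rewrite le_min => /andP[].
Qed.
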